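(* Let $\omega$ be a primitive substitution rule in $\mathbb{R}^d$ with finite local complexity whose expansion map is $Q=\lambda I$, where the expansion factor $\lambda$ is an irrational Pisot number. Let $\mathcal{T}$ be a tiling with $\omega(\mathcal{T})=\mathcal{T}$ (a fixed point of $\omega$), and assume $\mathcal{T}$ is repetitive. Then for every nonempty finite $\mathcal{T}$-legal patch $\mathcal{P}$ and every $v\in\mathbb{R}^d\setminus\{0\}$ there is $n_0\in\mathbb{N}$ such that the patch $\bigcup_{n=0}^{n_0}(\mathcal{P}+nv)$ is not $\mathcal{T}$-legal.
   Context: A tile in $\mathbb{R}^d$ is a compact set equal to the closure of its interior, possibly carrying a label from a fixed finite set; $T+x$ denotes the translate (same label). A patch is a set of tiles any two distinct members of which have disjoint interiors; its support is the closure of the union of the supports of its tiles; $\mathcal{P}+x=\{T+x: T\in\mathcal{P}\}$. A tiling is a patch whose support is $\mathbb{R}^d$. A patch $\mathcal{P}$ is $\mathcal{T}$-legal if $\mathcal{P}+x\subset\mathcal{T}$ for some $x\in\mathbb{R}^d$. $\mathcal{T}$ is repetitive if for every finite $\mathcal{T}$-legal patch $\mathcal{P}$ there is $R>0$ such that every ball of radius $R$ contains the support of some translate $\mathcal{P}+x\subset\mathcal{T}$. For a patch $\mathcal{P}$ and $S\subset\mathbb{R}^d$, $\mathcal{P}\sqcap S=\{T\in\mathcal{P}:\operatorname{supp}T\cap S\neq\emptyset\}$. A substitution rule consists of a finite set $\mathcal{A}$ of tiles (prototiles), a linear map $Q$ of $\mathbb{R}^d$ all of whose eigenvalues have modulus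 $>1$, and a map $\omega$ assigning to each $P\in\mathcal{A}$ a finite patch $\omega(P)$ of translates of elements of $\mathcal{A}$ with $\operatorname{supp}\omega(P)=Q(\operatorname{supp}P)$; it is extended by $\omega(P+x)=\omega(P)+Qx$ and to patches of translates of prototiles by taking unions. With $\mathcal{A}=\{T_1,\dots,T_m\}$, the substitution matrix has $(i,j)$ entry the number of translates of $T_i$ in $\omega(T_j)$; $\omega$ is primitive if some power of this matrix has all entries positive. $\omega$ has finite local complexity if for each compact $K$ the set $\{\omega^n(P)\sqcap(K+x): n>0, P\in\mathcal{A}, x\in\mathbb{R}^d\}$ is finite up to translation. A Pisot number is a real algebraic integer $>1$ all of whose other algebraic conjugates have modulus $<1$. *)

From HB Require Import structures.
From mathcomp Require Import all_boot all_order all_algebra.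
From mathcomp Require Import all_classical all_reals all_analysis.
From mathcomp.real_closed Require Import complex.
Set Implicit Arguments. Unset Strict Implicit. Unset Printing Implicit Defensive.
Import Order.TTheory GRing.Theory Num.Theory.
Import numFieldNormedType.Exports.
Local Open Scope classical_set_scope.
Local Open Scope ring_scope.

Section Tilings.
Variables (R : realType) (d : nat) (L : finType).
Local Notation V := 'rV[R]_d.

Record tile := Tile { supp : set V ; lab : L }.

Definition is_tile (t : tile) : Prop :=
  compact (supp t) /\ closure (interior (supp t)) = supp t.

Definition tr (t : tile) (x : V) : tile :=
  Tile [set y + x | y in supp t] (lab t).

Definition is_patch (P : set tile) : Prop :=
  (forall t, P t -> is_tile t) /\
  (forall t1 t2, P t1 -> P t2 -> t1 <> t2 ->
     interior (supp t1) `&` interior (supp t2) = set0).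

Definition psupp (P : set tile) : set V := closure (\bigcup_(t in P) supp t).

Definition ptr (P : set tile) (x : V) : set tile := [set tr t x | t in P].

Definition is_tiling (T : set tile) : Prop := is_patch T /\ psupp T = setT.

Definition legal (T P : set tile) : Prop := exists x : V, ptr P x `<=` T.

Definition eball (c : V) (r : R) : set V :=
  [set y | \sum_(i < d) ((y - c) ord0 i) ^+ 2 <= r ^+ 2].

Definition repetitive (T : set tile) : Prop :=
  forall P : set tile, finite_set P -> legal T P ->
  exists r : R, 0 < r /\
    forall c : V, exists x : V, ptr P x `<=` T /\ psupp (ptr P x) `<=` eball c r.

Definition pcap (P : set tile) (S : set V) : set tile :=
  [set t | P t /\ supp t `&` S !=set0].

(* Substitution data: prototiles proto : 'I_m -> tile, expansion Q = lam I,
   omega i = the finite patch omega(proto i), listed as translates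
   (j, y) standing for proto j + y. *)
Section Subst.
Variables (m : nat) (proto : 'I_m -> tile) (lam : R)
          (omega : 'I_m -> seq ('I_m * V)).

Definition omega_patch (i : 'I_m) : set tile :=
  [set t | exists2 p, p \in omega i & t = tr (proto p.1) p.2].

(* extension of omega to patches of translates of prototiles:
   omega(P + x) = omega(P) + Q x, and unions *)
Definition omegaP (P : set tile) : set tile :=
  [set t | exists i (x : V), P (tr (proto i) x) /\
             exists2 p, p \in omega i & t = tr (proto p.1) (lam *: x + p.2)].

Definition subst_matrix : 'M[int]_m :=
  \matrix_(i < m, j < m) (count (fun p : 'I_m * V => p.1 == i) (omega j))%:Z.

Definition primitive : Prop :=
  exists k : nat, forall i j, 0 < (subst_matrix ^+ k) i j.

Definition substitution_rule : Prop :=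
  (forall i, is_tile (proto i)) /\
  (forall i, uniq (omega i) /\
     forall p q, p \in omega i -> q \in omega i -> p != q ->
       interior (supp (tr (proto p.1) p.2)) `&`
       interior (supp (tr (proto q.1) q.2)) = set0) /\
  (forall i, psupp (omega_patch i) = [set lam *: y | y in supp (proto i)]) /\
  (* the extension omega(P + x) = omega(P) + Qx is well defined *)
  (forall i j (x y : V), tr (proto i) x = tr (proto j) y ->
     ptr (omega_patch i) (lam *: x) = ptr (omega_patch j) (lam *: y)).

Definition FLC : Prop :=
  forall K : set V, compact K ->
  exists s : seq (set tile),
    forall (n : nat) (i : 'I_m) (x : V), (0 < n)%N ->
      exists2 Q, Q \in s &
        exists y : V, pcap (iter n omegaP [set proto i]) [set k + x | k in K] = ptr Q y.
End Subst.
End Tilings.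

Definition pisot (R : realType) (lam : R) : Prop :=
  1 < lam /\
  exists p : {poly int},
    p \is monic /\ irreducible_poly (map_poly intr p : {poly rat}) /\
    root (map_poly intr p) lam /\
    forall z : R[i], root (map_poly intr p) z -> z != (lam%:C)%C -> `|z| < 1.

From HB Require Import structures.
From mathcomp Require Import all_boot all_order all_algebra all_field.
From mathcomp Require Import all_classical all_reals all_analysis.
From mathcomp.real_closed Require Import complex polyorder.
From mathcomp Require Import lra.
Import Order.TTheory GRing.Theory Num.Theory.
Import numFieldNormedType.Exports.
Set Implicit Arguments. Unset Strict Implicit. Unset Printing Implicit Defensive.
Local Open Scope classical_set_scope.
Local Open Scope ring_scope.

(* Let mu be a conjugate of the Pisot number lam with |mu| < 1 (one exists because
   lam is irrational) and sg the embedding of Q(lam) into C sending lam to mu.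
   Since T = omega(T), every tile position is y = lam x + e with x again a position
   and e in a finite digit set, and |x| < |y| - 1/lam once |y| is large; unwinding
   writes every position, hence every return vector w (t and t + w both in T), as a
   Q(lam)-combination of a fixed finite family of vectors whose coefficients have
   conjugates bounded by 1/(1 - |mu|) + O(1).  If P + n v were legal for all
   n <= N, then N v would be such a return vector for every N.  After eliminating
   Q(lam)-linear dependences in the family, the coefficients of N v are N times those
   of v, and their bounded conjugates force v = 0. *)

Lemma natmul_bounded_eq0 (R : archiRealFieldType) (x B : R) :
  0 <= x -> (forall N : nat, x *+ N <= B) -> x = 0.
Proof.
move=> x_ge0 xB; apply/eqP; rewrite eq_le x_ge0 andbT leNgt; apply/negP => x_gt0.
have B_ge0 : 0 <= B by have := xB 0%N; rewrite mulr0n.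
have := archi_boundP (divr_ge0 B_ge0 (ltW x_gt0)).
by rewrite ltr_pdivrMr // mulr_natl => /lt_le_trans/(_ (xB _)); rewrite ltxx.
Qed.

Lemma complex_natmul_bounded_eq0 (R : realType) (z B : R[i]) :
  (forall N : nat, `|z| *+ N <= B) -> z = 0.
Proof.
move=> zB; have B_ge0 : 0 <= B by have := zB 0%N; rewrite mulr0n.
have normzE : `|z| = (complex.Re `|z|)%:C%C := esym (RRe_real (normr_real z)).
have BE : B = (complex.Re B)%:C%C := esym (RRe_real (ger0_real B_ge0)).
have Re_normz0 : complex.Re `|z| = 0.
  apply: (@natmul_bounded_eq0 _ _ (complex.Re B)); first by rewrite -ler0c -normzE.
  by move=> N; have := zB N; rewrite {1}normzE {1}BE -rmorphMn lecR.
by apply: normr0_eq0; rewrite normzE Re_normz0.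
Qed.

Lemma irredp_dvdp_root (F L : fieldType) (f : {rmorphism F -> L}) (p q : {poly F}) x :
  irreducible_poly p -> root (map_poly f p) x -> root (map_poly f q) x -> p %| q.
Proof.
move=> p_irr px qx; apply: contraT; rewrite -irreducible_poly_coprime // => pq_coprime.
have := coprimep_root (etrans (coprimep_map f p q) pq_coprime) px.
by rewrite -rootE qx.
Qed.

Lemma irredp_separable (F : realFieldType) (p : {poly F}) :
  irreducible_poly p -> separable_poly p.
Proof.
move=> p_irr; rewrite unlock irreducible_poly_coprime //.
have [p_gt1 _] := p_irr.
have dp_neq0 : p^`() != 0 by rewrite -size_poly_eq0 size_deriv -subn1 subn_eq0 -ltnNge.
by apply: contraTN (lt_size_deriv (irredp_neq0 p_irr)) => /(dvdp_leq dp_neq0); rewrite leqNgt.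
Qed.

Lemma irredp_other_root (F : realFieldType) (C : closedFieldType) (f : {rmorphism F -> C})
    (p : {poly F}) x :
  irreducible_poly p -> (2 < size p)%N -> root (map_poly f p) x ->
  exists2 y, root (map_poly f p) y & y != x.
Proof.
move=> p_irr p_gt2 /factor_theorem [q pq].
have q_gt1 : (1 < size q)%N.
  have q_neq0 : q != 0.
    by apply: contraTneq p_gt2 => q0; rewrite -(size_map_poly f) pq q0 mul0r size_poly0.
  by move: p_gt2; rewrite -(size_map_poly f) pq size_mul ?polyXsubC_eq0 // size_XsubC addn2.
have [y qy] := closed_rootP q (negbT (gtn_eqF q_gt1)).
have : separable_poly (q * ('X - x%:P)) by rewrite -pq separable_map irredp_separable.
rewrite separable_root => /andP[_ qx].
exists y; first by rewrite pq rootM qy.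
by apply: contraNneq qx => <-.
Qed.

Section ConjugateEmbedding.
Variables (F L L' : fieldType) (iota : {rmorphism F -> L}) (f : {rmorphism F -> L'}).
Variables (p : {poly F}) (z : L) (w : L').
Hypotheses (p_irr : irreducible_poly p) (pz : root (map_poly iota p) z)
  (pw : root (map_poly f p) w).
Local Notation K := (subFExtend iota z p).

(* Independent of the chosen representative: p divides every polynomial
   vanishing at z. *)
Definition conj_eval (x : K) : L' := (map_poly f (sval (cid (subfxE x)))).[w].

Lemma conj_eval_subfx q : conj_eval (subfx_eval iota z p q) = (map_poly f q).[w].
Proof.
rewrite /conj_eval; case: cid => q' /= eqq'.
suff : root (map_poly f (q' - q)) w by rewrite rmorphB rootE hornerD hornerN subr_eq0 => /eqP.
have /dvdpP [r ->] : p %| q' - q.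
  apply: (irredp_dvdp_root p_irr pz); rewrite rmorphB rootE hornerD hornerN.
  by rewrite -!(subfx_inj_eval pz (irredp_neq0 p_irr)) eqq' subrr.
by rewrite rmorphM rootM pw orbT.
Qed.

Fact conj_eval_is_zmod_morphism : zmod_morphism conj_eval.
Proof.
move=> x y; have [qx ->] := subfxE x; have [qy ->] := subfxE y.
by rewrite -rmorphB !conj_eval_subfx rmorphB hornerD hornerN.
Qed.

Fact conj_eval_is_monoid_morphism : monoid_morphism conj_eval.
Proof.
split; first by rewrite -(rmorph1 (subfx_eval iota z p)) conj_eval_subfx rmorph1 hornerC.
move=> x y; have [qx ->] := subfxE x; have [qy ->] := subfxE y.
by rewrite -rmorphM !conj_eval_subfx rmorphM hornerM.
Qed.

HB.instance Definition _ := GRing.isZmodMorphism.Build K L' conj_eval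
  conj_eval_is_zmod_morphism.
HB.instance Definition _ := GRing.isMonoidMorphism.Build K L' conj_eval
  conj_eval_is_monoid_morphism.

Definition conj_embedding : {rmorphism K -> L'} := conj_eval.

Lemma conj_embedding_root : conj_embedding (subfx_root iota z p) = w.
Proof. by rewrite /= conj_eval_subfx map_polyX hornerX. Qed.

End ConjugateEmbedding.

Lemma size2_root_rat (F : numFieldType) (p : {poly rat}) (x : F) :
  size p = 2 -> root (map_poly ratr p) x -> x = ratr (- p`_0 / p`_1).
Proof.
move=> p2; rewrite rootE horner_coef size_map_poly p2 !big_ord_recl big_ord0 /=.
rewrite !coef_map /= expr0 mulr1 expr1 addr0.
have : lead_coef p != 0 by rewrite lead_coef_eq0 -size_poly_eq0 p2.
rewrite lead_coefE p2 -(fmorph_eq0 (ratr : {rmorphism rat -> F})) => a1 /eqP h.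
rewrite fmorph_div rmorphN /= -[x](mulKf a1) -[_ * x](addKr (ratr p`_0)) h addr0.
by rewrite mulrC mulNr.
Qed.

Lemma pisot_conjugate_embedding (R : realType) (lam : R) : pisot lam -> irrational lam ->
  exists (K : fieldType) (iota : {rmorphism K -> R}) (sg : {rmorphism K -> R[i]}) (a : K),
    iota a = lam /\ `|sg a| < 1.
Proof.
move=> [_ [p [_ [p_irr [p_lam p_conj]]]]] lam_irr.
set pQ : {poly rat} := map_poly intr p in p_irr.
have ratr_pQ (F : numFieldType) : map_poly (ratr : rat -> F) pQ = map_poly intr p.
  by rewrite -map_poly_comp; apply: eq_map_poly => a /=; rewrite ratr_int.
have pQ_lam : root (map_poly ratr pQ) lam by rewrite ratr_pQ.
have pQ_lamC : root (map_poly (ratr : rat -> R[i]) pQ) lam%:C%C.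
  have := rmorph_root (real_complex R) p_lam; rewrite -map_poly_comp ratr_pQ.
  by congr root; apply: eq_map_poly => n /=; rewrite rmorph_int.
have pQ_gt2 : (2 < size pQ)%N.
  have [pQ_gt1 _] := p_irr; rewrite ltn_neqAle pQ_gt1 andbT.
  apply/eqP => /esym pQ2; apply: lam_irr; rewrite (size2_root_rat pQ2 pQ_lam).
  by exists (- pQ`_0 / pQ`_1).
have [mu pQ_mu mu_neq] := irredp_other_root p_irr pQ_gt2 pQ_lamC.
exists (subFExtend ratr lam pQ), (@subfx_inj _ _ ratr lam pQ), (conj_embedding p_irr pQ_lam pQ_mu).
exists (subfx_root ratr lam pQ); split; first exact: subfx_inj_root pQ_lam (irredp_neq0 p_irr).
by rewrite conj_embedding_root; apply: p_conj; rewrite -?ratr_pQ.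
Qed.

Section BoundedCombinations.
Variables (R : realType) (K : fieldType) (iota : {rmorphism K -> R})
  (sg : {rmorphism K -> R[i]}) (V : lmodType R).

Definition bounded_comb n (r : 'I_n -> V) (B : R[i]) (y : V) : Prop :=
  exists2 c : 'I_n -> K, y = \sum_i iota (c i) *: r i & forall i, `|sg (c i)| <= B.

Lemma free_bounded_multiples_eq0 n (r : 'I_n -> V) B w :
  (forall a : 'I_n -> K, \sum_i iota (a i) *: r i = 0 -> forall i, a i = 0) ->
  (forall N : nat, bounded_comb r B (w *+ N)) -> w = 0.
Proof.
move=> r_free wB; have [c1 w1 _] := wB 1%N; rewrite mulr1n in w1.
suff c1_eq0 i : c1 i = 0 by rewrite w1 big1 // => i _; rewrite c1_eq0 rmorph0 scale0r.
apply/eqP; rewrite -(fmorph_eq0 sg); apply/eqP/(@complex_natmul_bounded_eq0 _ _ B) => N.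
have [cN wN cN_le] := wB N.
have cNE : cN i = c1 i *+ N.
  apply/eqP; rewrite -subr_eq0; apply/eqP; apply: (r_free (fun i => cN i - c1 i *+ N)).
  under eq_bigr do rewrite rmorphB rmorphMn scalerBl -scalerMnl.
  by rewrite sumrB sumrMnl -wN -w1 subrr.
by rewrite -normrMn -rmorphMn -cNE.
Qed.

Lemma bounded_comb_elim n (r : 'I_n.+1 -> V) (i0 : 'I_n.+1) (b : 'I_n -> K) B y :
  r i0 = \sum_j iota (b j) *: r (lift i0 j) -> bounded_comb r B y ->
  bounded_comb (r \o lift i0) (B + B * \sum_j `|sg (b j)|) y.
Proof.
move=> ri0 [c -> c_le]; exists (fun j => c (lift i0 j) + c i0 * b j).
  rewrite (bigD1_ord i0) //= ri0 scaler_sumr addrC -big_split /=.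
  by apply: eq_bigr => j _; rewrite rmorphD rmorphM scalerDl scalerA.
have B_ge0 : 0 <= B := le_trans (normr_ge0 _) (c_le i0).
move=> j; rewrite rmorphD rmorphM; apply: le_trans (ler_normD _ _) _.
rewrite normrM lerD // ler_pM //.
by rewrite (bigD1 j) //= lerDl sumr_ge0.
Qed.

Lemma bounded_multiples_eq0 n (r : 'I_n -> V) B w :
  (forall N : nat, bounded_comb r B (w *+ N)) -> w = 0.
Proof.
elim: n r B => [|n IHn] r B wB.
  by have [c w1 _] := wB 1%N; rewrite mulr1n big_ord0 in w1.
have [[a [ra0 [i0 ai0]]]|r_free] := pselect (exists a : 'I_n.+1 -> K,
  \sum_i iota (a i) *: r i = 0 /\ exists i, a i != 0); last first.
  apply: (free_bounded_multiples_eq0 _ wB) => a ra0 i; apply/eqP/contraT => ai.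
  by case: r_free; exists a; split => //; exists i.
pose b j := - (a (lift i0 j) / a i0).
have ri0 : r i0 = \sum_j iota (b j) *: r (lift i0 j).
  have iota_ai0 : iota (a i0) != 0 by rewrite fmorph_eq0.
  move: ra0; rewrite (bigD1_ord i0) //= => /eqP; rewrite addr_eq0 => /eqP ra0.
  rewrite -[r i0](scalerK iota_ai0) ra0 scalerN scaler_sumr -sumrN.
  by apply: eq_bigr => j _; rewrite scalerA -scaleNr rmorphN fmorph_div mulrC.
exact: IHn _ _ (fun N => bounded_comb_elim ri0 (wB N)).
Qed.

Lemma bounded_comb_le n (r : 'I_n -> V) B B' y :
  B <= B' -> bounded_comb r B y -> bounded_comb r B' y.
Proof. by move=> BB' [c yE c_le]; exists c => // i; apply: le_trans (c_le i) BB'. Qed.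

Lemma bounded_combD n (r : 'I_n -> V) B B' y y' :
  bounded_comb r B y -> bounded_comb r B' y' -> bounded_comb r (B + B') (y + y').
Proof.
move=> [c -> c_le] [c' -> c'_le]; exists (fun i => c i + c' i).
  by rewrite -big_split; apply: eq_bigr => i _; rewrite rmorphD scalerDl.
by move=> i; rewrite rmorphD (le_trans (ler_normD _ _)) ?lerD.
Qed.

Lemma bounded_combN n (r : 'I_n -> V) B y :
  bounded_comb r B y -> bounded_comb r B (- y).
Proof.
move=> [c -> c_le]; exists (fun i => - c i) => [|i]; last by rewrite rmorphN normrN.
by rewrite -sumrN; apply: eq_bigr => i _; rewrite rmorphN scaleNr.
Qed.

Lemma bounded_combZ n (r : 'I_n -> V) B a y :
  bounded_comb r B y -> bounded_comb r (`|sg a| * B) (iota a *: y).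
Proof.
move=> [c -> c_le]; exists (fun i => a * c i) => [|i].
  by rewrite scaler_sumr; apply: eq_bigr => i _; rewrite rmorphM scalerA.
by rewrite rmorphM normrM ler_wpM2l.
Qed.

Lemma bounded_comb_mem (G : seq V) e :
  e \in G -> bounded_comb (fun i : 'I_(size G) => G`_i) 1 e.
Proof.
rewrite -index_mem => eG; pose i0 := Ordinal eG.
exists (fun i => (i == i0)%:R) => [|i]; last first.
  by case: eqP; rewrite ?rmorph1 ?rmorph0 ?normr1 ?normr0.
rewrite (bigD1 i0) //= eqxx rmorph1 scale1r nth_index -?index_mem // big1 ?addr0 // => i.
by move=> /negPf ->; rewrite rmorph0 scale0r.
Qed.

End BoundedCombinations.

Lemma expansion_norm_le (R : realFieldType) (V : normedModType R) (lam C : R) (x e : V) :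
  1 < lam -> `|e| <= C -> (C + 1) / (lam - 1) < `|lam *: x + e| ->
  `|x| <= `|lam *: x + e| - lam^-1.
Proof.
set y := lam *: x + e => lam_gt1 e_le y_gt.
have lam_gt0 : 0 < lam := lt_trans ltr01 lam_gt1.
have : `|lam *: x| <= `|y| + C.
  have -> : lam *: x = y - e by rewrite addrK.
  by apply: le_trans (ler_normB _ _) _; rewrite lerD2l.
rewrite normrZ gtr0_norm // => lamx_le.
rewrite -(ler_pM2l lam_gt0) mulrBr mulfV ?gt_eqF //.
move: y_gt; rewrite ltr_pdivrMr ?subr_gt0 // => y_gt.
lra.
Qed.

Section Expansion.
Variables (R : realType) (K : fieldType) (iota : {rmorphism K -> R})
  (sg : {rmorphism K -> R[i]}) (V : normedModType R) (a : K).
Hypotheses (a_gt1 : 1 < iota a) (sg_a_lt1 : `|sg a| < 1).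
Local Notation bounded_comb := (bounded_comb iota sg).

Lemma bounded_comb_expansion (D G : seq V) (S : set V) :
  {subset D <= G} ->
  (forall y, S y -> exists2 x, S x & exists2 e, e \in D & y = iota a *: x + e) ->
  (forall y, S y -> `|y| <= (\sum_(e <- D) `|e| + 1) / (iota a - 1) -> y \in G) ->
  forall y, S y -> bounded_comb (fun i : 'I_(size G) => G`_i) (1 - `|sg a|)^-1 y.
Proof.
set C := \sum_(e <- D) `|e|; set rho := (C + 1) / _ => DG S_exp S_small.
set gens := fun i : 'I_(size G) => G`_i; set beta := (1 - `|sg a|)^-1.
have a_gt0 : 0 < iota a := lt_trans ltr01 a_gt1.
have sg_a1_gt0 : 0 < 1 - `|sg a| by rewrite subr_gt0.
have beta_ge1 : 1 <= beta by rewrite invf_ge1 // gerBl.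
have beta_fix : `|sg a| * beta + 1 = beta.
  by rewrite /beta -[X in _ + X](mulfV (lt0r_neq0 sg_a1_gt0)) -mulrDl addrC subrK mul1r.
have small y : S y -> `|y| <= rho -> bounded_comb gens beta y.
  move=> Sy y_le; apply: bounded_comb_le beta_ge1 _.
  exact: bounded_comb_mem (S_small y Sy y_le).
suff bounded N y : S y -> `|y| <= rho + N%:R / iota a -> bounded_comb gens beta y.
  move=> y Sy; apply: (bounded (Num.bound (`|y| * iota a))) => //.
  have rho_ge0 : 0 <= rho.
    apply: divr_ge0; last by rewrite subr_ge0 ltW.
    by apply: addr_ge0 => //; apply: sumr_ge0.
  have := archi_boundP (mulr_ge0 (normr_ge0 y) (ltW a_gt0)).
  by rewrite -ltr_pdivlMr // => /ltW /le_trans; apply; rewrite lerDr.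
elim: N y => [|N IHN] y Sy; first by rewrite mul0r addr0; apply: small.
have [y_le|y_gt] := leP `|y| rho; first by move=> _; apply: small.
have [x Sx [e eD yE]] := S_exp y Sy; rewrite yE in y_gt * => y_le.
rewrite -beta_fix; apply: bounded_combD (bounded_combZ _ _) (bounded_comb_mem _ _ (DG _ eD)).
apply: IHN => //; apply: le_trans (expansion_norm_le a_gt1 _ y_gt) _.
  by rewrite /C (big_rem e) //= lerDl sumr_ge0.
by move: y_le; rewrite -[N.+1]addn1 natrD mulrDl mul1r; lra.
Qed.

End Expansion.

Section NormedSpace.
Variables (R : realType) (V : normedModType R).

Lemma compact_translate_inj (A : set V) (a b : V) : compact A -> A !=set0 ->
  [set y + a | y in A] = [set y + b | y in A] -> a = b.
Proof.
move=> cA [y0 Ay0] Aab.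
have A_shift y : A y -> A (y + (a - b)).
  move=> Ay; have : [set y + b | y in A] (y + a) by rewrite -Aab; exists y.
  by case=> z Az zE; rewrite addrA -zE addrK.
have A_iter n : A (y0 + (a - b) *+ n).
  elim: n => [|n IHn]; first by rewrite mulr0n addr0.
  by rewrite mulrS addrCA addrC; apply: A_shift.
have [M [_ AM]] := compact_bounded cA.
have A_le y : A y -> `|y| <= M + 1 by move=> Ay; apply: AM; rewrite ?ltrDl.
apply/subr0_eq/normr0_eq0/(@natmul_bounded_eq0 _ _ ((M + 1) + (M + 1))) => // N.
rewrite -normrMn -[_ *+ N](addrK y0) [_ + y0]addrC.
by apply: le_trans (ler_normB _ _) _; rewrite lerD ?A_le.
Qed.

Lemma separated_compact_finite (S C : set V) (eps : R) : compact C -> 0 < eps ->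
  (forall x x', S x -> S x' -> `|x - x'| < eps -> x = x') ->
  exists s : seq V, forall x, S x -> C x -> x \in s.
Proof.
move=> cC eps_gt0 S_sep; have eps2_gt0 : 0 < eps / 2 by rewrite divr_gt0.
move: cC; rewrite compact_cover => /(_ V setT (fun c => ball c (eps / 2))).
case=> [c _|x _|D _ DC]; first exact: ball_open.
  by exists x => //; apply: ballxx.
exists [seq xget 0 [set x | S x /\ ball c (eps / 2) x] | c <- finmap.enum_fset D] => x Sx Cx.
have [c Dc cx] := DC x Cx; apply/mapP; exists c => //.
case: xgetP => [x' _ [Sx' cx']|/(_ x) []//]; apply: S_sep => //.
rewrite -ball_normE /= in cx cx'.
have -> : x - x' = (c - x') - (c - x) by rewrite opprB [RHS]addrC addrA subrK.
by apply: le_lt_trans (ler_normB _ _) _; rewrite (splitr eps) ltrD.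
Qed.

Lemma interior_translate (A : set V) (c x z : V) (eps : R) :
  ball c eps `<=` A -> ball (c + x) eps z -> interior [set y + x | y in A] z.
Proof.
move=> cA cxz; have cxA : ball (c + x) eps `<=` [set y + x | y in A].
  move=> y; rewrite -ball_normE /= => cxy; exists (y - x); last by rewrite subrK.
  by apply: cA; rewrite -ball_normE /= opprB addrA.
by apply: (filterS cxA); apply: open_nbhs_nbhs; split => //; apply: ball_open.
Qed.

End NormedSpace.

Section Translations.
Variables (R : realType) (d : nat) (L : finType).
Local Notation V := 'rV[R]_d.
Implicit Types (t : tile R d L) (a b : V).

Lemma trD t a b : tr (tr t a) b = tr t (a + b).
Proof.
congr Tile; apply/seteqP; split => y /=.
  by case=> _ [z tz <-] <-; exists z; rewrite ?addrA.
by case=> z tz <-; exists (z + a); [exists z | rewrite addrA].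
Qed.

Lemma tr0 t : tr t 0 = t.
Proof.
case: t => A l; congr Tile; apply/seteqP; split => y /=.
  by case=> z Az <-; rewrite addr0.
by move=> Ay; exists y; rewrite ?addr0.
Qed.

Lemma tr_inj t a b : compact (supp t) -> supp t !=set0 -> tr t a = tr t b -> a = b.
Proof. by move=> ct t_neq0 /(congr1 (@supp R d L)); apply: compact_translate_inj. Qed.

Lemma norm_le_compact (r : R) : compact [set x : V | `|x| <= r].
Proof.
apply: bounded_closed_compact.
  by exists r; split; rewrite ?num_real // => M /ltW rM x /= /le_trans; apply.
have -> : [set x : V | `|x| <= r] = closed_ball_ Num.norm 0 r.
  by apply/seteqP; split => x; rewrite /closed_ball_ /= sub0r normrN.
exact: closed_closed_ball_.
Qed.

End Translations.

Section FixedPointTiling.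
Variables (R : realType) (d : nat) (L : finType) (m : nat)
  (proto : 'I_m -> tile R d L) (lam : R) (omega : 'I_m -> seq ('I_m * 'rV[R]_d))
  (T : set (tile R d L)).
Local Notation V := 'rV[R]_d.
Hypotheses (omega_subst : substitution_rule proto lam omega)
  (omega_prim : primitive omega) (T_tiling : is_tiling T)
  (T_proto : forall t, T t -> exists i (x : V), t = tr (proto i) x).

Lemma subst_supp_eq0 i p : supp (proto i) = set0 -> p \in omega i -> supp (proto p.1) = set0.
Proof.
move=> i0 p_i; have [_ [_ [omega_supp _]]] := omega_subst.
have := omega_supp i; rewrite i0 image_set0 => /seteqP[omega0 _].
apply/seteqP; split => // y p1y; apply: (omega0 (y + p.2)); apply: subset_closure.
by exists (tr (proto p.1) p.2); [exists p | exists y].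
Qed.

Lemma subst_matrixX_eq0 k i j : supp (proto i) = set0 -> supp (proto j) !=set0 ->
  (subst_matrix omega ^+ k) j i = 0.
Proof.
elim: k i j => [|k IHk] i j i0 j_neq0.
  by rewrite expr0 mxE; case: eqP => // ji; move: j_neq0; rewrite ji i0 => -[].
rewrite exprSr mxE; apply: big1 => l _.
have [l0|l_neq0] := pselect (supp (proto l) = set0); first by rewrite (IHk l) ?mul0r.
rewrite [subst_matrix _ _ _]mxE (_ : count _ _ = 0%N) ?mulr0 //.
apply/eqP; rewrite -leqn0 leqNgt -has_count; apply/hasP => -[p p_i /eqP p1].
by apply: l_neq0; rewrite -p1; apply: subst_supp_eq0 p_i.
Qed.

Lemma proto_supp_neq0 i : supp (proto i) !=set0.
Proof.
apply: contrapT => /nonemptyPn i0; have [k Mk_gt0] := omega_prim.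
have all0 j : supp (proto j) = set0.
  by apply: contrapT => /eqP/set0P j_neq0; move: (Mk_gt0 j i); rewrite subst_matrixX_eq0.
have [_ T_cover] := T_tiling; move: T_cover; rewrite /psupp bigcup0 ?closure0.
  by move/seteqP => [_ /(_ 0)]; apply.
by move=> t /T_proto [j [x ->]]; rewrite /= all0 image_set0.
Qed.

Lemma proto_tr_inj i a b : tr (proto i) a = tr (proto i) b -> a = b.
Proof.
have [proto_tile _] := omega_subst; have [proto_compact _] := proto_tile i.
exact: tr_inj proto_compact (proto_supp_neq0 i).
Qed.

Definition proto_offset j l : V := xget 0 [set c | tr (proto j) c = proto l].

Lemma proto_offsetP j l a b : tr (proto j) a = tr (proto l) b -> a = b + proto_offset j l.
Proof.
move=> jl; have jl' : tr (proto j) (a - b) = proto l by rewrite -trD jl trD subrr tr0.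
rewrite /proto_offset; case: xgetP => [c _ jc|/(_ (a - b))//].
by rewrite -(proto_tr_inj (etrans jl' (esym jc))) addrC subrK.
Qed.

Lemma tiling_tr_separated i : exists2 eps : R, 0 < eps &
  forall x x', T (tr (proto i) x) -> T (tr (proto i) x') -> `|x - x'| < eps -> x = x'.
Proof.
have [proto_tile _] := omega_subst; have [_ proto_regular] := proto_tile i.
have [c c_int] : interior (supp (proto i)) !=set0.
  apply: contrapT => /nonemptyPn int0; have [z iz] := proto_supp_neq0 i.
  by move: iz; rewrite -proto_regular int0 closure0.
have [eps eps_gt0 c_ball] := (nbhs_ballP c _).1 c_int.
(* Otherwise c + x' would be an interior point of both translates. *)
exists eps => // x x' Tx Tx' xx'; apply: contrapT => x_neq.
have [[_ T_disj] _] := T_tiling.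
have := T_disj _ _ Tx Tx' (fun e => x_neq (proto_tr_inj e)).
move/seteqP => [/(_ (c + x')) + _]; apply; split; apply: interior_translate c_ball _.
  by rewrite -ball_normE /= opprD addrACA subrr add0r.
exact: ballxx.
Qed.

Lemma tiling_positions_finite (r : R) :
  exists s : seq V, forall i x, T (tr (proto i) x) -> `|x| <= r -> x \in s.
Proof.
have fin i : exists s : seq V, forall x, T (tr (proto i) x) -> `|x| <= r -> x \in s.
  have [eps eps_gt0 T_sep] := tiling_tr_separated i.
  exact: separated_compact_finite (@norm_le_compact R d r) eps_gt0 T_sep.
have [s sP] := choice fin.
exists (flatten [seq s i | i <- enum 'I_m]) => i x Tx x_le.
by apply/flattenP; exists (s i); [apply: map_f; rewrite mem_enum | apply: sP].
Qed.

Hypothesis T_fixed : omegaP proto lam omega T = T.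

Definition tile_positions : set V := [set y | exists j, T (tr (proto j) y)].

Definition subst_digits : seq V := [seq p.2 + proto_offset j p.1 |
  j <- enum 'I_m, p <- flatten [seq omega i | i <- enum 'I_m]].

Lemma tile_positions_expansion y : tile_positions y ->
  exists2 x, tile_positions x & exists2 e, e \in subst_digits & y = lam *: x + e.
Proof.
move=> [j]; rewrite -T_fixed => -[i [x [Tx [p p_i jp]]]].
exists x; first by exists i.
exists (p.2 + proto_offset j p.1); last by rewrite (proto_offsetP jp) addrA.
apply/allpairsP; exists (j, p); split; rewrite ?mem_enum //=.
by apply/flattenP; exists (omega i) => //; apply: map_f; rewrite mem_enum.
Qed.

Lemma tiling_returns_bounded_comb (K : fieldType) (iota : {rmorphism K -> R})
    (sg : {rmorphism K -> R[i]}) (a : K) :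
  iota a = lam -> 1 < lam -> `|sg a| < 1 ->
  exists (G : seq V) (B : R[i]), forall t w, T t -> T (tr t w) ->
    bounded_comb iota sg (fun i : 'I_(size G) => G`_i) B w.
Proof.
move=> iota_a lam_gt1 sg_a_lt1; rewrite -iota_a in lam_gt1.
set rho := (\sum_(e <- subst_digits) `|e| + 1) / (iota a - 1).
have [F FP] := tiling_positions_finite rho.
set G := subst_digits ++ F ++ [seq proto_offset j l | j <- enum 'I_m, l <- enum 'I_m].
set beta := (1 - `|sg a|)^-1.
have positions_bounded y : tile_positions y ->
    bounded_comb iota sg (fun i : 'I_(size G) => G`_i) beta y.
  apply: (bounded_comb_expansion lam_gt1 sg_a_lt1 (D := subst_digits)).
  - by move=> e De; rewrite mem_cat De.
  - by rewrite iota_a; apply: tile_positions_expansion.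
  - by move=> x [j Tx] x_le; rewrite !mem_cat (FP j x) ?orbT.
exists G, (beta + beta + 1) => t w Tt Ttw.
have [j [y tE]] := T_proto Tt; have [l [z twE]] := T_proto Ttw.
have := @proto_offsetP j l (y + w) z; rewrite -trD -tE twE => /(_ erefl) yw.
have -> : w = z - y + proto_offset j l by rewrite addrAC -yw addrC addKr.
apply: bounded_combD (bounded_combD _ (bounded_combN _)) (bounded_comb_mem _ _ _).
- by apply: positions_bounded; exists l; rewrite -twE.
- by apply: positions_bounded; exists j; rewrite -tE.
- by rewrite !mem_cat; apply/or3P/Or33/allpairsP; exists (j, l); rewrite !mem_enum.
Qed.

End FixedPointTiling.

Unset Implicit Arguments.

Theorem theorem3p1 (R : realType) (d : nat) (L : finType) (m : nat)
  (proto : 'I_m -> tile R d L) (lam : R) (omega : 'I_m -> seq ('I_m * 'rV[R]_d))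
  (T : set (tile R d L)) :
  substitution_rule proto lam omega ->
  primitive omega ->
  FLC proto lam omega ->
  pisot lam -> irrational lam ->
  is_tiling T ->
  (forall t, T t -> exists i (x : 'rV[R]_d), t = tr (proto i) x) ->
  omegaP proto lam omega T = T ->
  repetitive T ->
  forall P : set (tile R d L), finite_set P -> P !=set0 -> legal T P ->
  forall v : 'rV[R]_d, v != 0 ->
  exists n0 : nat,
    ~ legal T [set t | exists2 n : nat, (n <= n0)%N & ptr P (n%:R *: v) t].
Proof.
move=> omega_subst omega_prim _ lam_pisot lam_irr T_tiling T_proto T_fixed _ P _ [t0 Pt0] _ v.
apply: contraNP => all_legal.
have [K [iota [sg [a [iota_a sg_a_lt1]]]]] := pisot_conjugate_embedding lam_pisot lam_irr.
have [G [B returns_bounded]] := tiling_returns_bounded_comb omega_subst omega_prim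
  T_tiling T_proto T_fixed iota_a lam_pisot.1 sg_a_lt1.
apply/eqP/(bounded_multiples_eq0 (r := fun i : 'I_(size G) => G`_i) (B := B)) => N.
have [x PNx] : legal T [set t | exists2 n : nat, (n <= N)%N & ptr P (n%:R *: v) t].
  by apply: contrapT => not_legal; apply: all_legal; exists N.
have T_patch n : (n <= N)%N -> T (tr (tr t0 (v *+ n)) x).
  move=> n_le; apply: PNx; exists (tr t0 (v *+ n)) => //.
  by exists n => //; rewrite scaler_nat; exists t0.
apply: returns_bounded (T_patch 0%N _) _ => //.
by rewrite mulr0n tr0 trD addrC -trD; apply: T_patch.
Qed.
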